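(* Let $n\ge 2$, and let $A\in\mathbb R^{(n+3)\times(n+3)}$, $B\in\mathbb R^{(n+3)\times(n+1)}$ be the matrices \[ A=\begin{bmatrix}\mathbf 0_{2,2}&A_{12}\\ A_{21}&A_{22}\end{bmatrix},\ A_{12}=\begin{bmatrix}-c_0&\mathbf 0_n^\top\\ a&-a\mathbf 1_n^\top\end{bmatrix},\ A_{21}=\begin{bmatrix}b_0&0&\dots&0\\ d_0&b_1&\dots&b_n\end{bmatrix}^\top,\ A_{22}=\operatorname{diag}(e_0,\dots,e_n), \] \[ B=\begin{bmatrix}\mathbf 0_n^\top&c_0\\ \mathbf 0_n^\top&0\\ \mathbf 0_n^\top & 0\\ \operatorname{diag}(d_1,\dots,d_n)&\mathbf 0_n\end{bmatrix},\qquad a=c_1\left(\sum_{j=1}^n\prod_{\substack{i=1\\ i\neq j}}^n c_i\right)^{-1}\prod_{i=2}^n c_i, \] of the state-space model of a joint of $n$ pipes $P_1,\dots,P_n$ merging into $P_0$, with state $x=[p_{0,r},p_{1,r},q_{0,\ell},q_{1,\ell},\dots,q_{n,\ell}]^\top$ and input $u=[p_{1,\ell},\dots,p_{n,\ell},q_{0,r}]^\top$. Suppose $(x,u)$ is a steady state, i.e. $Ax+Bu=0$, and for $k=1,\dots,n$ let $q_{k,r}$ be defined by \[ \left(\sum_{j=1}^n\prod_{\substack{i=1\\ i\neq j}}^n c_i\right)q_{k,r}=\prod_{\substack{i=1\\ i\neq k}}^n c_i\left(q_{0,\ell}-\sum_{\substack{i=1\\ i\neq k}}^n q_{i,\ell}\right)+\left(\sum_{j=1}^n\prod_{\substack{i=1\\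 i\neq j}}^n c_i-\prod_{\substack{i=1\\ i\neq k}}^n c_i\right)q_{k,\ell}. \] Then $q_{0,\ell}=q_{1,r}+q_{2,r}+\dots+q_{n,r}$ (conservation of mass).
   Context: Coefficients of the linearized isothermal pipe model: $c_j=-\frac{R_sT_0z_0}{A_jL_j}$, $b_j=-\frac{A_j}{L_j}$, $d_j=\frac{A_j}{L_j}+\frac{\lambda_j R_sT_0z_0}{2D_jA_j}\frac{q_{ss,j}|q_{ss,j}|}{p_{\ell,ss,j}^2}-\frac{A_jgh_j}{R_sT_0z_0L_j}$, $e_j=-\frac{\lambda_j R_sT_0z_0}{D_jA_j}\frac{|q_{ss,j}|}{p_{\ell,ss,j}}$, with positive constants $R_s,T_0,z_0$, gravity $g$, and per-pipe area $A_j>0$, length $L_j>0$, diameter $D_j>0$, friction factor $\lambda_j$, elevation difference $h_j$, nominal flow $q_{ss,j}>0$, nominal left pressure $p_{\ell,ss,j}>0$; so all $c_j<0$. Here $p$ is pressure, $q$ mass flow, subscripts $\ell,r$ the left and right pipe ends; $q_{k,r}$ is the outflow of pipe $P_k$ into the junction. $\mathbf 0_{i}$, $\mathbf 0_{i,j}$ are zero vectors/matrices, $\mathbf 1_n$ the all-ones vector. *)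

From HB Require Import structures.
From mathcomp Require Import all_boot all_order all_algebra.
From mathcomp Require Import all_classical all_reals.
Set Implicit Arguments. Unset Strict Implicit. Unset Printing Implicit Defensive.
Import Order.TTheory GRing.Theory Num.Theory.
Local Open Scope ring_scope.

(* Physical data of the pipes P_0, ..., P_n (pipe index j : nat, only
   j <= n is relevant). *)
Record pipe_data (R : realType) := PipeData {
  Rs : R; T0 : R; z0 : R; grav : R;
  area : nat -> R; len : nat -> R; diam : nat -> R; fric : nat -> R;
  elev : nat -> R; qss : nat -> R; pss : nat -> R }.

Definition pipe_data_ok (R : realType) (n : nat) (P : pipe_data R) : Prop :=
  [/\ 0 < Rs P, 0 < T0 P, 0 < z0 P, 0 < grav P &
   forall j, (j <= n)%N ->
     [/\ 0 < area P j, 0 < len P j, 0 < diam P j, 0 < qss P j & 0 < pss P j]].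

Section Coefs.
Variables (R : realType) (P : pipe_data R).
Let K := Rs P * T0 P * z0 P.
Definition coef_c (j : nat) : R := - (K / (area P j * len P j)).
Definition coef_b (j : nat) : R := - (area P j / len P j).
Definition coef_d (j : nat) : R :=
  area P j / len P j
  + (fric P j * K) / (2 * diam P j * area P j)
    * (qss P j * `|qss P j|) / (pss P j ^+ 2)
  - (area P j * grav P * elev P j) / (K * len P j).
Definition coef_e (j : nat) : R :=
  - ((fric P j * K) / (diam P j * area P j) * `|qss P j| / pss P j).
End Coefs.

Section Joint.
Variables (R : realType) (n : nat) (c b d e : nat -> R).

Definition prod_except (k : nat) : R := \prod_(1 <= i < n.+1 | i != k) c i.
Definition sum_prod_except : R := \sum_(1 <= j < n.+1) prod_except j.
Definition coef_a : R :=
  c 1 * (sum_prod_except)^-1 * \prod_(2 <= i < n.+1) c i.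

(* State x = [p_{0,r}; p_{1,r}; q_{0,l}; q_{1,l}; ...; q_{n,l}] (indices
   0, 1, 2, 3, ..., n+2).  The matrix A of size (n+3)x(n+3), written entrywise:
   rows 0,1 : [0_{2,2} A12],  rows 2..n+2 : [A21 A22]. *)
Definition joint_A : 'M[R]_(n.+3) :=
  \matrix_(i < n.+3, j < n.+3)
    let i := nat_of_ord i in let j := nat_of_ord j in
    if (i == 0)%N then (if (j == 2)%N then - c 0 else 0)
    else if (i == 1)%N then
      (if (j == 2)%N then coef_a else if (3 <= j)%N then - coef_a else 0)
    else if (i == 2)%N then
      (if (j == 0)%N then b 0 else if (j == 1)%N then d 0
       else if (j == 2)%N then e 0 else 0)
    else (* i = k + 2, 1 <= k <= n *)
      (if (j == 1)%N then b (i - 2)%N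
       else if (j == i)%N then e (i - 2)%N else 0).

(* Input u = [p_{1,l}; ...; p_{n,l}; q_{0,r}] (indices 0..n).  The matrix B
   of size (n+3)x(n+1). *)
Definition joint_B : 'M[R]_(n.+3, n.+1) :=
  \matrix_(i < n.+3, j < n.+1)
    let i := nat_of_ord i in let j := nat_of_ord j in
    if (i == 0)%N then (if (j == n)%N then c 0 else 0)
    else if (3 <= i)%N then (if (j == i - 3)%N then d (i - 2)%N else 0)
    else 0.
End Joint.

Definition q0l (R : realType) (n : nat) (x : 'cV[R]_(n.+3)) : R :=
  x (inord 2) 0.
Definition qkl (R : realType) (n : nat) (x : 'cV[R]_(n.+3)) (k : nat) : R :=
  x (inord k.+2) 0.

From HB Require Import structures.
From mathcomp Require Import all_boot all_order all_algebra.
From mathcomp Require Import all_classical all_reals.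
From mathcomp.algebra_tactics Require Import ring.
Import Order.TTheory GRing.Theory Num.Theory.
Local Open Scope ring_scope.

(* With weights p_k summing to S != 0, the defining relation of q_{k,r}
   rearranges to S q_{k,r} = p_k (q_{0,l} - sum_i q_{i,l}) + S q_{k,l}; summing
   over k, the first terms add up to S (q_{0,l} - sum_i q_{i,l}), and the total
   is S q_{0,l}.  The weights are the products prod_{i<>k} c_i, whose sum is
   nonzero because all c_i are negative: it equals (prod_i c_i)(sum_i 1/c_i). *)

Section WeightedSplit.
Variables (F : fieldType) (I : eqType) (s : seq I) (p q r : I -> F) (q0 : F).
Hypothesis s_uniq : uniq s.
Hypothesis sum_p_neq0 : \sum_(i <- s) p i != 0.
Hypothesis rE : forall k, k \in s ->
  (\sum_(i <- s) p i) * r k =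
    p k * (q0 - \sum_(i <- s | i != k) q i) + (\sum_(i <- s) p i - p k) * q k.

Lemma weighted_split_sum : q0 = \sum_(k <- s) r k.
Proof.
set S := \sum_(i <- s) p i; set T := \sum_(i <- s) q i.
have rE' k : k \in s -> S * r k = p k * (q0 - T) + S * q k.
  move=> ks; have -> : T = q k + \sum_(i <- s | i != k) q i.
    by rewrite /T (bigD1_seq k).
  rewrite rE // -/S; move: (\sum_(i <- s | i != k) q i) => T'; ring.
apply: (mulfI sum_p_neq0); rewrite mulr_sumr (eq_big_seq _ rE').
by rewrite big_split /= -mulr_suml -mulr_sumr -/S -/T -mulrDr subrK.
Qed.

End WeightedSplit.

Lemma sum_prod_except_neq0 (F : realFieldType) (I : eqType) (s : seq I)
    (c : I -> F) :
  uniq s -> s != [::] -> (forall i, i \in s -> c i < 0) ->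
  \sum_(j <- s) \prod_(i <- s | i != j) c i != 0.
Proof.
move=> s_uniq s_nil c_lt0.
have c_neq0 i : i \in s -> c i != 0 by move/c_lt0/ltr0_neq0.
have -> : \sum_(j <- s) \prod_(i <- s | i != j) c i
          = \prod_(i <- s) c i * \sum_(j <- s) (c j)^-1.
  rewrite mulr_sumr; apply: eq_big_seq => j js.
  by rewrite (bigD1_seq j) //= mulrAC mulfV ?mul1r // c_neq0.
rewrite mulf_neq0 //.
  by rewrite prodf_seq_neq0; apply/allP => i /c_neq0.
case: s s_nil s_uniq c_lt0 {c_neq0} => [//|j s] _ _ c_lt0.
rewrite big_cons ltr0_neq0 // ltr_wnDr ?invr_lt0 ?c_lt0 ?mem_head //.
by rewrite big_seq sumr_le0 // => i si; rewrite invr_le0 ltW // c_lt0 // inE si orbT.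
Qed.

Lemma coef_c_lt0 (R : realType) (n : nat) (P : pipe_data R) (j : nat) :
  pipe_data_ok n P -> (j <= n)%N -> coef_c P j < 0.
Proof.
case=> Rs_gt0 T0_gt0 z0_gt0 _ pipe_ok /pipe_ok[area_gt0 len_gt0 _ _ _].
by rewrite oppr_lt0 divr_gt0 ?mulr_gt0.
Qed.

Theorem corollary2 (R : realType) (n : nat) (P : pipe_data R)
  (x : 'cV[R]_(n.+3)) (u : 'cV[R]_(n.+1)) (qr : nat -> R) :
  (2 <= n)%N ->
  pipe_data_ok n P ->
  let c := coef_c P in let b := coef_b P in
  let d := coef_d P in let e := coef_e P in
  joint_A n c b d e *m x + joint_B n c d *m u = 0 ->
  (forall k, (1 <= k <= n)%N ->
     sum_prod_except n c * qr k =
       prod_except n c k * (q0l x - \sum_(1 <= i < n.+1 | i != k) qkl x i)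
       + (sum_prod_except n c - prod_except n c k) * qkl x k) ->
  q0l x = \sum_(1 <= k < n.+1) qr k.
Proof.
move=> n_ge2 P_ok c b d e _ qrE.
have mem_range k : (k \in index_iota 1 n.+1) = (1 <= k <= n)%N.
  by rewrite mem_index_iota ltnS.
have weights_neq0 : sum_prod_except n c != 0.
  apply: sum_prod_except_neq0; first exact: iota_uniq.
    by rewrite -size_eq0 size_iota subSS subn0 -lt0n (ltn_trans _ n_ge2).
  by move=> i; rewrite mem_range => /andP[_]; apply: coef_c_lt0.
apply: (@weighted_split_sum _ _ _ (prod_except n c) (qkl x) _ _ (iota_uniq 1 _)
         weights_neq0) => k.
by rewrite mem_range; apply: qrE.
Qed.
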